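(* Let $X$ be an exponential vector space over a field $K$. If $A$ and $B$ are two bases of $X\smallsetminus X_0$, then $A$ and $B$ have the same cardinality.
   Context: An exponential vector space (evs) over a field $K$ is a partially ordered set $(X,\leq)$ with a binary operation $+$ on $X$ and a map $K\times X\to X$, $(\alpha,x)\mapsto \alpha x$, such that: (A1) $(X,+)$ is a commutative semigroup with identity $\theta$; (A2) $x\leq y$ implies $x+z\leq y+z$ and $\alpha x\leq \alpha y$ for all $z\in X$, $\alpha\in K$; (A3) $\alpha(x+y)=\alpha x+\alpha y$, $\alpha(\beta x)=(\alpha\beta)x$, $(\alpha+\beta)x\leq \alpha x+\beta x$, $1x=x$; (A4) $\alpha x=\theta$ iff $\alpha=0$ or $x=\theta$; (A5) $x+(-1)x=\theta$ iff $x\in X_0$, where $X_0:=\{z\in X: y\not\leq z \text{ for all } y\in X\smallsetminus\{z\}\}$ (the set of minimal elements, called the primitive space; it is a vector space over $K$); (A6) for each $x\in X$ there is $p\in X_0$ with $p\leq x$. For $x\in X\smallsetminus X_0$ let $L(x):=\{z\in X: z\geq \alpha x+p \text{ for some } \alpha\in K\smallsetminus\{0\},\ p\in X_0\}$. A subset $B\subseteq X\smallsetminus X_0$ generates $X\smallsetminus X_0$ if $X\smallsetminus X_0=\bigcup_{b\in B}L(b)$. Elements $x,y\in X\smallsetminus X_0$ are orderly dependent if $x\in L(y)$ or $y\in L(x)$, and orderly independent otherwise; $B\subseteq X\smallsetminus X_0$ is orderly independent if any two distinct members of $B$ are orderly independent. A basis of $X\smallsetminus X_0$ is an orderly independent subset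 of $X\smallsetminus X_0$ that generates $X\smallsetminus X_0$. *)

From HB Require Import structures.
From mathcomp Require Import all_boot all_algebra.
Set Implicit Arguments. Unset Strict Implicit. Unset Printing Implicit Defensive.
Import GRing.Theory.
Local Open Scope ring_scope.

Definition minimal_el (T : Type) (le : T -> T -> Prop) (z : T) : Prop :=
  forall y : T, y <> z -> ~ le y z.

Record evs (K : fieldType) := EVS {
  ev_car :> Type;
  ev_le : ev_car -> ev_car -> Prop;
  ev_add : ev_car -> ev_car -> ev_car;
  ev_zero : ev_car;
  ev_smul : K -> ev_car -> ev_car;
  ev_le_refl : forall x, ev_le x x;
  ev_le_trans : forall x y z, ev_le x y -> ev_le y z -> ev_le x z;
  ev_le_antisym : forall x y, ev_le x y -> ev_le y x -> x = y;
  ev_addA : forall x y z, ev_add x (ev_add y z) = ev_add (ev_add x y) z;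
  ev_addC : forall x y, ev_add x y = ev_add y x;
  ev_add0 : forall x, ev_add x ev_zero = x;
  ev_le_add : forall x y z, ev_le x y -> ev_le (ev_add x z) (ev_add y z);
  ev_le_smul : forall (a : K) x y, ev_le x y -> ev_le (ev_smul a x) (ev_smul a y);
  ev_smulD : forall (a : K) x y, ev_smul a (ev_add x y) = ev_add (ev_smul a x) (ev_smul a y);
  ev_smulA : forall (a b : K) x, ev_smul a (ev_smul b x) = ev_smul (a * b) x;
  ev_smul_addK : forall (a b : K) x, ev_le (ev_smul (a + b) x) (ev_add (ev_smul a x) (ev_smul b x));
  ev_smul1 : forall x, ev_smul 1 x = x;
  ev_smul_eq0 : forall (a : K) x, ev_smul a x = ev_zero <-> (a = 0 \/ x = ev_zero);
  ev_primitive : forall x, ev_add x (ev_smul (-1) x) = ev_zero <-> minimal_el ev_le x;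
  ev_prim_below : forall x, exists p, minimal_el ev_le p /\ ev_le p x
}.

Section EvsDefs.
Variables (K : fieldType) (X : evs K).

Definition X0 (z : X) : Prop := minimal_el (@ev_le K X) z.

Definition Lset (x : X) : X -> Prop :=
  fun z => exists (a : K) (p : X), a <> 0 /\ X0 p /\ ev_le (ev_add (ev_smul a x) p) z.

Definition generates (B : X -> Prop) : Prop :=
  (forall b, B b -> ~ X0 b) /\
  (forall z, ~ X0 z <-> exists b, B b /\ Lset b z).

Definition orderly_dependent (x y : X) : Prop := Lset y x \/ Lset x y.

Definition orderly_independent_set (B : X -> Prop) : Prop :=
  (forall b, B b -> ~ X0 b) /\
  (forall x y, B x -> B y -> x <> y -> ~ orderly_dependent x y).

Definition is_basis (B : X -> Prop) : Prop :=
  orderly_independent_set B /\ generates B.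

End EvsDefs.

Definition same_card (T : Type) (A B : T -> Prop) : Prop :=
  exists f : {x | A x} -> {x | B x}, bijective f.

(** Because the primitive space is closed under scaling and addition,
    [x \in L(y)] and [y \in L(z)] imply [x \in L(z)]; orderly independence says
    that on a basis this relation is equality.  Choose for every [a \in A] some
    [f a \in B] with [a \in L(f a)], and symmetrically [g : B -> A].  Then
    [a \in L(g (f a))] with both [a] and [g (f a)] in [A], so [g (f a) = a]; by
    symmetry [f] and [g] are mutually inverse. *)

From mathcomp Require Import all_boot all_algebra.
From Stdlib Require Import ClassicalEpsilon ProofIrrelevance.
Set Implicit Arguments. Unset Strict Implicit. Unset Printing Implicit Defensive.
Import GRing.Theory.
Local Open Scope ring_scope.

Section Bases.
Variables (K : fieldType) (X : evs K).

Lemma ev_smulr0 (a : K) : ev_smul a (ev_zero X) = ev_zero X.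
Proof. by apply/ev_smul_eq0; right. Qed.

Lemma X0_smul (a : K) (p : X) : X0 p -> X0 (ev_smul a p).
Proof.
move=> /ev_primitive p_neg; apply/ev_primitive.
by rewrite ev_smulA mulrC -ev_smulA -ev_smulD p_neg ev_smulr0.
Qed.

Lemma X0_add (p q : X) : X0 p -> X0 q -> X0 (ev_add p q).
Proof.
move=> /ev_primitive p_neg /ev_primitive q_neg; apply/ev_primitive.
by rewrite ev_smulD -ev_addA (ev_addA q) (ev_addC q) -(ev_addA _ q) q_neg ev_add0.
Qed.

Lemma Lset_trans (x y z : X) : Lset y x -> Lset z y -> Lset z x.
Proof.
move=> [a [p [a_neq0 [p_prim le_x]]]] [b [q [b_neq0 [q_prim le_y]]]].
exists (a * b), (ev_add (ev_smul a q) p); split.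
  by apply/eqP; rewrite mulf_neq0 //; apply/eqP.
split; first by apply: X0_add => //; apply: X0_smul.
apply: ev_le_trans le_x.
rewrite ev_addA -ev_smulA -ev_smulD.
by apply: ev_le_add; apply: ev_le_smul.
Qed.

Lemma orderly_independent_Lset_eq (A : X -> Prop) (x y : X) :
  orderly_independent_set A -> A x -> A y -> Lset y x -> x = y.
Proof.
move=> [_ A_indep] Ax Ay Lyx.
by apply: NNPP => x_neq_y; apply: (A_indep x y Ax Ay x_neq_y); left.
Qed.

Lemma generates_choice (A B : X -> Prop) :
  (forall a, A a -> ~ X0 a) -> generates B ->
  exists f : {a | A a} -> {b | B b}, forall a, Lset (sval (f a)) (sval a).
Proof.
move=> A_nonprim [_ B_gen].
apply: (ClassicalEpsilon.choice (fun a b => Lset (sval b) (sval a))) => -[a Aa].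
have [b [Bb Lba]] := proj1 (B_gen a) (A_nonprim a Aa).
by exists (exist _ b Bb).
Qed.

Lemma Lset_choice_cancel (A B : X -> Prop)
    (f : {a | A a} -> {b | B b}) (g : {b | B b} -> {a | A a}) :
  orderly_independent_set A ->
  (forall a, Lset (sval (f a)) (sval a)) -> (forall b, Lset (sval (g b)) (sval b)) ->
  cancel f g.
Proof.
move=> A_indep Lf Lg a.
apply: eq_sig_hprop => [? ? ?|]; first exact: proof_irrelevance.
symmetry; apply: (orderly_independent_Lset_eq A_indep); try exact: proj2_sig.
exact: Lset_trans (Lf a) (Lg (f a)).
Qed.

End Bases.

Theorem mainTheorem3 (K : fieldType) (X : evs K) (A B : X -> Prop) :
  is_basis A -> is_basis B -> same_card A B.
Proof.
move=> [A_indep A_gen] [B_indep B_gen].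
have [f Lf] := generates_choice (proj1 A_indep) B_gen.
have [g Lg] := generates_choice (proj1 B_indep) A_gen.
exists f, g; exact: Lset_choice_cancel.
Qed.
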